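(* Let $K$ be a finite simplicial complex with a hereditary ordering $\succ$, and let $r$ be a positive integer. Suppose that for any two simplices $\sigma,\tau\in K$ with $\dim\sigma=\dim\tau\ge r$ and $\mu(\sigma)=\mu(\tau)$ we have $\sigma\cup\tau\in K$. Then $K$ collapses on a subcomplex of dimension less than $r$.
   Context: $K$ is a finite simplicial complex (family of subsets of a finite vertex set containing $\emptyset$, closed under subsets); $\dim\sigma=|\sigma|-1$. For a strict total ordering $\succ$ of $K$ and non-empty $\sigma$, $\mu(\sigma)$ is the $\succ$-largest facet (codimension-one face) of $\sigma$; $\succ$ is hereditary if $\sigma\succ\tau$ whenever $\dim\sigma>\dim\tau$, and $\sigma\succ\tau$ whenever $\mu(\sigma)\succ\mu(\tau)$. A pair of non-empty simplices $(\sigma,\tau)$ is a free pair of $K$ if $\tau$ is a facet of $\sigma$ and $K\setminus\{\sigma,\tau\}$ is a simplicial complex; removing it is an elementary collapse. $K$ collapses on a subcomplex $L$ if $L$ is obtained from $K$ by a finite sequence of elementary collapses. *)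

From mathcomp Require Import all_boot.
From Stdlib Require Import Relations.
Set Implicit Arguments. Unset Strict Implicit. Unset Printing Implicit Defensive.

(* A finite simplicial complex on a finite vertex type V is a family
   K : {set {set V}} containing the empty set and closed under subsets.
   dim s = #|s| - 1, so dimensions are compared via cardinalities. *)
Definition simplicial_complex (V : finType) (K : {set {set V}}) : Prop :=
  set0 \in K /\ (forall s t : {set V}, s \in K -> t \subset s -> t \in K).

Definition facet (V : finType) (t s : {set V}) : bool :=
  (t \subset s) && (#|t|.+1 == #|s|).

Definition strict_total_order_on (V : finType) (K : {set {set V}})
    (succ : rel {set V}) : Prop :=
  (forall x, x \in K -> ~~ succ x x) /\
  (forall x y z, x \in K -> y \in K -> z \in K -> succ x y -> succ y z -> succ x z) /\
  (forall x y, x \in K -> y \in K -> x != y -> succ x y || succ y x).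

Definition mu (V : finType) (succ : rel {set V}) (s : {set V}) : {set V} :=
  odflt set0 [pick t : {set V} | facet t s &&
     [forall t' : {set V}, (facet t' s && (t' != t)) ==> succ t t']].

Definition hereditary (V : finType) (K : {set {set V}}) (succ : rel {set V}) : Prop :=
  strict_total_order_on K succ /\
  (forall s t, s \in K -> t \in K -> #|s| > #|t| -> succ s t) /\
  (forall s t, s \in K -> t \in K -> s != set0 -> t != set0 ->
     succ (mu succ s) (mu succ t) -> succ s t).

Definition free_pair (V : finType) (K : {set {set V}}) (s t : {set V}) : Prop :=
  s \in K /\ t \in K /\ s != set0 /\ t != set0 /\ facet t s /\
      simplicial_complex (K :\ s :\ t).

Definition elementary_collapse (V : finType) (K L : {set {set V}}) : Prop :=
  exists s t, free_pair K s t /\ L = K :\ s :\ t.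

Definition collapses (V : finType) (K L : {set {set V}}) : Prop :=
  clos_refl_trans _ (@elementary_collapse V) K L.

From mathcomp Require Import all_boot.
From Stdlib Require Import Relations.
Set Implicit Arguments. Unset Strict Implicit. Unset Printing Implicit Defensive.

(** Repeatedly collapse the ≻-largest simplex s of size greater than r onto its
    ≻-largest facet μ(s).  The pair (s, μ(s)) is free: another coface u of μ(s)
    has the size of s and, by maximality of s, μ(u) = μ(s), so the hypothesis
    puts s ∪ u in K.  Its facets s and u share μ, and an exchange argument shows
    that then μ(s ∪ u) is s or u.  The exchange argument: if ρ beats every set
    obtained from ρ by swapping one of its vertices for a vertex of A, then ρ
    beats every set of its size inside ρ ∪ A (induction on |ρ|, passing from ρ
    to μ(ρ)).
    To exclude s ∪ u, the current complex L keeps the invariant that every μ(w)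
    (w ∈ K) lying in L is also μ of a simplex of L: a simplex of L with the same
    μ as s ∪ u would be larger than s.  Removing s and μ(s) preserves the
    invariant because μ(μ(s)) is also μ of another facet of s. *)

Section Facets.
Variable V : finType.
Implicit Types s t : {set V}.

Lemma facet_sub t s : facet t s -> t \subset s.
Proof. by case/andP. Qed.

Lemma facet_card t s : facet t s -> #|s| = #|t|.+1.
Proof. by case/andP=> _ /eqP. Qed.

Lemma facetD1 s x : x \in s -> facet (s :\ x) s.
Proof. by move=> xs; rewrite /facet subD1set (cardsD1 x s) xs /= add1n. Qed.

Lemma facetP t s : facet t s -> exists2 z, z \in s & t = s :\ z.
Proof.
case/andP=> ts /eqP st.
have /cards1P[z sDt] : #|s :\: t| == 1.
  by rewrite cardsD (setIidPr ts) -st subSnn.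
have zs : z \in s by have := set11 z; rewrite -sDt => /setDP[].
by exists z; rewrite // -sDt setDDr setDv set0U (setIidPr ts).
Qed.

Lemma facet_eqD1 t s a : facet t s -> a \in s -> a \notin t -> t = s :\ a.
Proof.
case/facetP=> z zs ->; rewrite !inE negb_and negbK => as_ /orP[/eqP-> //|].
by rewrite as_.
Qed.

End Facets.

Section StrictTotalOrder.
Variables (V : finType) (K : {set {set V}}) (succ : rel {set V}).
Hypothesis ordK : strict_total_order_on K succ.

Lemma succ_irr x : x \in K -> ~~ succ x x.
Proof. exact: ordK.1. Qed.

Lemma succ_trans x y z : x \in K -> y \in K -> z \in K ->
  succ x y -> succ y z -> succ x z.
Proof. by move=> xK yK zK; apply: ordK.2.1. Qed.

Lemma succ_asym x y : x \in K -> y \in K -> succ x y -> succ y x -> False.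
Proof.
by move=> xK yK xy yx; have := succ_irr xK; rewrite (succ_trans xK yK xK xy yx).
Qed.

Lemma succ_total x y : x \in K -> y \in K -> x != y -> ~~ succ x y -> succ y x.
Proof. by move=> xK yK /(ordK.2.2 x y xK yK)/orP[->|]. Qed.

Lemma succ_max_exists (F : {set {set V}}) : F \subset K -> F != set0 ->
  exists2 f, f \in F & forall g, g \in F -> g != f -> succ f g.
Proof.
move=> FK /set0Pn[f0 f0F].
pose above f := #|[set g in F | succ g f]|.
have [f fF fmin] := arg_minnP above f0F.
exists f => // g gF gf; have fK := subsetP FK f fF; have gK := subsetP FK g gF.
apply: contraTT (fmin g gF) => fg; rewrite -ltnNge /above.
have gf' : succ g f by apply: succ_total fK gK _ fg; rewrite eq_sym.
apply/proper_card/properP; split.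
  apply/subsetP => h; rewrite !inE => /andP[hF hg]; rewrite hF.
  exact: succ_trans (subsetP FK h hF) gK fK hg gf'.
by exists g; rewrite !inE ?gF ?gf' // (negbTE (succ_irr gK)).
Qed.

End StrictTotalOrder.

Section Mu.
Variables (V : finType) (K : {set {set V}}) (succ : rel {set V}).
Hypotheses (complexK : simplicial_complex K) (herK : hereditary K succ).
Let ordK : strict_total_order_on K succ := herK.1.
Implicit Types s t f w y rho A X Y : {set V}.

Lemma face_in s t : s \in K -> t \subset s -> t \in K.
Proof. exact: complexK.2. Qed.

Lemma facet_in s t : s \in K -> facet t s -> t \in K.
Proof. by move=> sK /facet_sub; apply: face_in. Qed.

Lemma mu_spec s : s \in K -> s != set0 ->
  facet (mu succ s) s /\ forall f, facet f s -> f != mu succ s -> succ (mu succ s) f.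
Proof.
move=> sK /set0Pn[x xs].
have FK : [set f | facet f s] \subset K.
  by apply/subsetP => f; rewrite inE; apply: facet_in.
have Fn : [set f | facet f s] != set0.
  by apply/set0Pn; exists (s :\ x); rewrite inE facetD1.
have [f] := succ_max_exists ordK FK Fn; rewrite inE => fs fmax.
rewrite /mu; case: pickP => [t /andP[ts /forallP tmax]|].
  by split=> // g gs gt; have := tmax g; rewrite gs gt.
move/(_ f); rewrite fs /= => /negbT/negP[].
apply/forallP => g; apply/implyP => /andP[gs gf].
by apply: fmax; rewrite ?inE.
Qed.

Lemma mu_facet s : s \in K -> s != set0 -> facet (mu succ s) s.
Proof. by move=> sK sn; have [] := mu_spec sK sn. Qed.

Lemma mu_max s f : s \in K -> s != set0 ->
  facet f s -> f != mu succ s -> succ (mu succ s) f.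
Proof. by move=> sK sn; have [_] := mu_spec sK sn; apply. Qed.

Lemma mu_in s : s \in K -> s != set0 -> mu succ s \in K.
Proof. by move=> sK sn; apply: facet_in sK (mu_facet sK sn). Qed.

Lemma mu_monotone s t : s \in K -> t \in K -> s != set0 -> t != set0 ->
  succ s t -> mu succ s = mu succ t \/ succ (mu succ s) (mu succ t).
Proof.
move=> sK tK sn tn st.
have [->|ne] := eqVneq (mu succ s) (mu succ t); [by left | right].
apply: (succ_total ordK (mu_in tK tn) (mu_in sK sn)); first by rewrite eq_sym.
by apply/negP => /(herK.2.2 _ _ tK sK tn sn); exact: (succ_asym ordK sK tK st).
Qed.

Definition exchange_max (rho A : {set V}) :=
  forall z a, z \in rho -> a \in A -> succ rho (a |: (rho :\ z)).

Lemma mu_exchange s a z : s \in K -> a \in s -> mu succ s = s :\ a ->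
  z \in mu succ s -> succ (mu succ s) (a |: (mu succ s :\ z)).
Proof.
move=> sK as_ muE zmu.
have sn : s != set0 by apply/set0Pn; exists a.
have /setD1P[za zs] : z \in s :\ a by rewrite -muE.
have -> : a |: (mu succ s :\ z) = s :\ z.
  apply/setP => x; rewrite muE !inE.
  by case: (eqVneq x a) => [->|] //=; rewrite eq_sym za.
apply: mu_max sK sn (facetD1 zs) _; rewrite muE.
by apply/eqP => /setP/(_ a); rewrite !inE eqxx as_ eq_sym za.
Qed.

Lemma exchange_max_mu rho A z0 : rho :|: A \in K -> [disjoint rho & A] ->
  exchange_max rho A -> z0 \in rho -> mu succ rho = rho :\ z0 ->
  exchange_max (rho :\ z0) (z0 |: A).
Proof.
move=> UK dis exA z0r muE z a zr.
have inU X : X \subset rho :|: A -> X \in K by apply: face_in.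
have rK : rho \in K by apply/inU/subsetUl.
have rn : rho != set0 by apply/set0Pn; exists z0.
rewrite -muE in zr *; case/setU1P => [->|aA]; first exact: mu_exchange.
have ar := disjointFl dis aA.
have /setD1P[zz0 zr'] : z \in rho :\ z0 by rewrite -muE.
set Y := a |: (rho :\ z); set W := a |: (mu succ rho :\ z).
have YK : Y \in K.
  by apply: inU; apply/subsetP => x /setU1P[->|/setD1P[_ xr]]; rewrite inE ?aA ?xr ?orbT.
have Yn : Y != set0 by apply/set0Pn; exists a; rewrite setU11.
have fWY : facet W Y.
  have -> : W = Y :\ z0.
    apply/setP => x; rewrite /W muE !inE.
    case: (eqVneq x a) => [->|] /=; last by rewrite andbCA.
    by rewrite andbT; apply/esym; apply: contraFneq ar => ->.
  by apply: facetD1; rewrite !inE z0r (eq_sym z0 z) zz0 orbT.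
have Wmu : W != mu succ rho.
  by apply/eqP => /setP/(_ a); rewrite /W muE !inE eqxx ar andbF.
have RY := mu_monotone rK YK rn Yn (exA z a zr' aA).
have [muW|neW] := eqVneq W (mu succ Y).
  by case: RY => [muRY|]; [move: Wmu; rewrite muW muRY eqxx | rewrite muW].
have YW := mu_max YK Yn fWY neW.
case: RY => [->//|RY].
exact: (succ_trans ordK (mu_in rK rn) (mu_in YK Yn) (facet_in YK fWY) RY YW).
Qed.

Lemma exchange_max_max rho A X : rho :|: A \in K -> [disjoint rho & A] ->
  exchange_max rho A -> X \subset rho :|: A -> #|X| = #|rho| -> X != rho ->
  succ rho X.
Proof.
have [n] := ubnP #|rho|; elim: n rho A X => // n IH rho A X /ltnSE rn UK dis exA XU Xc Xr.
have inU Y : Y \subset rho :|: A -> Y \in K by apply: face_in.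
have rK : rho \in K by apply/inU/subsetUl.
have XK := inU X XU.
have [r0|rn0] := eqVneq rho set0.
  by move: Xr; rewrite r0 -cards_eq0 Xc r0 cards0.
have Xn : X != set0 by rewrite -card_gt0 Xc card_gt0.
have [z0 z0r muE] := facetP (mu_facet rK rn0).
have U0 : (rho :\ z0) :|: (z0 |: A) = rho :|: A.
  by rewrite setUCA setUA setD1K.
have dis0 : [disjoint rho :\ z0 & z0 |: A].
  rewrite disjoint_sym disjoints_subset subUset sub1set !inE eqxx /=.
  rewrite disjoint_sym disjoints_subset in dis.
  by apply: subset_trans dis _; rewrite setCS subD1set.
have rho0_max Y : Y \subset rho :|: A -> #|Y| = #|rho :\ z0| -> Y != rho :\ z0 ->
    succ (rho :\ z0) Y.
  rewrite -U0; apply: IH; rewrite ?U0 //; last exact: exchange_max_mu.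
  by apply: leq_trans rn; rewrite (cardsD1 z0 rho) z0r.
case: (boolP (succ rho X)) => // nrX.
have Xrho : succ X rho by apply: (succ_total ordK rK XK) nrX; rewrite eq_sym.
have muX : mu succ X = rho :\ z0.
  case: (mu_monotone XK rK Xn rn0 Xrho) => [->//|]; rewrite muE => h.
  apply/eqP; apply: contraT => ne; exfalso.
  have fX := mu_facet XK Xn.
  apply: (succ_asym ordK (mu_in XK Xn) (inU _ _) h (rho0_max _ _ _ ne)).
  - by apply: subset_trans (subD1set _ _) (subsetUl _ _).
  - exact: subset_trans (facet_sub fX) XU.
  - by apply: succn_inj; rewrite -(facet_card fX) Xc (cardsD1 z0 rho) z0r.
have [w wX Xw] := facetP (mu_facet XK Xn).
have XE : X = w |: (rho :\ z0) by rewrite -muX Xw setD1K.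
have /setUP[wr|wA] := subsetP XU w wX.
  have wz0 : w = z0.
    by apply/eqP; apply: contraT => ne; move: (setD11 w X); rewrite -Xw muX !inE ne wr.
  by move: Xr; rewrite XE wz0 setD1K ?eqxx.
by move: nrX; rewrite XE exA.
Qed.

Lemma common_mu_exchange_max w a b : w \in K -> a \in w -> b \in w -> a != b ->
  mu succ (w :\ b) = mu succ (w :\ a) ->
  [/\ mu succ (w :\ b) :|: [set a; b] = w, [disjoint mu succ (w :\ b) & [set a; b]]
    & exchange_max (mu succ (w :\ b)) [set a; b]].
Proof.
move=> wK aw bw ab muST.
have sK := face_in wK (subD1set w b); have tK := face_in wK (subD1set w a).
have as_ : a \in w :\ b by rewrite !inE ab.
have bt : b \in w :\ a by rewrite !inE eq_sym ab.
have sn : w :\ b != set0 by apply/set0Pn; exists a.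
have tn : w :\ a != set0 by apply/set0Pn; exists b.
have ar : a \notin mu succ (w :\ b).
  by rewrite muST; apply/negP => /(subsetP (facet_sub (mu_facet tK tn))); rewrite setD11.
have br : b \notin mu succ (w :\ b).
  by apply/negP => /(subsetP (facet_sub (mu_facet sK sn))); rewrite setD11.
have muS := facet_eqD1 (mu_facet sK sn) as_ ar.
have muT : mu succ (w :\ a) = w :\ a :\ b.
  by apply: facet_eqD1 (mu_facet tK tn) bt _; rewrite -muST.
split.
- apply/setP => x; rewrite muS !inE.
  by case: (eqVneq x a) => [->|] //=; case: (eqVneq x b) => [->|] //=; rewrite orbF.
- by rewrite disjoint_sym disjoints_subset subUset !sub1set !inE ar br.
move=> z c zr /set2P[]->; first exact: mu_exchange.
by rewrite muST in zr *; apply: mu_exchange.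
Qed.

Lemma mu_two_facets w s t : w \in K -> facet s w -> facet t w -> s != t ->
  mu succ s = mu succ t -> mu succ w = s \/ mu succ w = t.
Proof.
move=> wK fs ft; have [b bw ->] := facetP fs; have [a aw ->] := facetP ft => st muST.
have ab : a != b by apply: contraNneq st => ->.
have [wE dis exA] := common_mu_exchange_max wK aw bw ab muST.
set rho := mu succ (w :\ b) in wE dis exA.
have sK := face_in wK (subD1set w b).
have sn : w :\ b != set0 by apply/set0Pn; exists a; rewrite !inE ab.
have wn : w != set0 by apply/set0Pn; exists a.
have fw := mu_facet wK wn; have fK := mu_in wK wn.
have [|ns] := eqVneq (mu succ w) (w :\ b); [by left | right].
apply/eqP; apply: contraT => nt; exfalso.
have fn : mu succ w != set0.
  by rewrite -card_gt0 -ltnS -(facet_card fw) (cardsD1 b w) bw add1n ltnS card_gt0.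
have ffw := mu_facet fK fn.
have rhoE : mu succ (mu succ w) = rho.
  have ws : succ (mu succ w) (w :\ b) by apply: mu_max wK wn (facetD1 bw) _; rewrite eq_sym.
  case: (mu_monotone fK sK fn sn ws) => // h.
  apply/eqP; apply: contraT => ne; exfalso.
  have UK : rho :|: [set a; b] \in K by rewrite wE.
  apply: (succ_asym ordK (mu_in sK sn) (mu_in fK fn) (exchange_max_max UK dis exA _ _ ne) h).
    by rewrite wE; apply: subset_trans (facet_sub ffw) (facet_sub fw).
  move: (facet_card ffw) (facet_card fw) (facet_card (mu_facet sK sn)) (cardsD1 b w).
  by rewrite bw add1n => h1 h2 h3 h4; do 2!apply: succn_inj; rewrite -h1 -h2 h4 h3.
have [x xw fE] := facetP fw.
have xr : x \notin rho.
  by rewrite -rhoE; apply/negP => /(subsetP (facet_sub ffw)); rewrite fE setD11.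
move: xw; rewrite -wE !inE (negbTE xr) /= => /orP[]/eqP xE.
  by move: nt; rewrite fE xE eqxx.
by move: ns; rewrite fE xE eqxx.
Qed.

Lemma mu_mu_sibling s : s \in K -> 1 < #|s| ->
  exists y, [/\ y \subset s, y != mu succ s, #|y| = #|mu succ s|
                & mu succ y = mu succ (mu succ s)].
Proof.
move=> sK s_gt1.
have sn : s != set0 by rewrite -card_gt0 ltnW.
have fs := mu_facet sK sn; have tK := facet_in sK fs.
have tn : mu succ s != set0 by rewrite -card_gt0 -ltnS -(facet_card fs).
have ft := mu_facet tK tn.
have [c cs tE] := facetP fs.
have ct : c \notin mu succ s by rewrite tE setD11.
have cx : c \notin mu succ (mu succ s) by apply: contra ct; apply: (subsetP (facet_sub ft)).
set t := mu succ s in fs tK tn ft tE ct cx *; set x := mu succ t in ft cx *.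
have ys : c |: x \subset s.
  by apply/subsetP => z /setU1P[->//|/(subsetP (facet_sub ft))]; rewrite tE => /setD1P[].
have yc : #|c |: x| = #|t| by rewrite cardsU1 cx (facet_card ft).
have fxy : facet x (c |: x) by rewrite /facet subsetUr yc (facet_card ft) eqxx.
have yK := face_in sK ys.
have yn : c |: x != set0 by apply/set0Pn; exists c; rewrite setU11.
exists (c |: x); split=> //.
  by apply: contraNneq ct => <-; rewrite setU11.
apply/eqP; apply: contraT => ne; exfalso.
have xy : succ (mu succ (c |: x)) x by apply: mu_max yK yn fxy _; rewrite eq_sym.
have [w wy myE] := facetP (mu_facet yK yn).
have wc : w != c by apply: contraNneq ne => wc; rewrite myE wc setU1K.
have ws : w \in s := subsetP ys w wy.
have fg : facet (s :\ w) s := facetD1 ws.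
have gK := facet_in sK fg.
have tg : succ t (s :\ w).
  by apply: mu_max sK sn fg _; rewrite -/t; apply: contraNneq ct => <-; rewrite !inE eq_sym wc.
have gc : #|s :\ w| = #|t| by apply: succn_inj; rewrite -(facet_card fg) (facet_card fs).
have gn : s :\ w != set0 by rewrite -card_gt0 gc card_gt0.
have fyg : facet (mu succ (c |: x)) (s :\ w).
  by rewrite /facet myE setSD //= gc -yc (cardsD1 w (c |: x)) wy.
have gx : succ (mu succ (s :\ w)) x.
  have [<-//|ne'] := eqVneq (mu succ (c |: x)) (mu succ (s :\ w)).
  have yg := mu_max gK gn fyg ne'.
  exact: (succ_trans ordK (mu_in gK gn) (mu_in yK yn) (facet_in tK ft) yg xy).
exact: (succ_asym ordK tK gK tg (herK.2.2 _ _ gK tK gn tn gx)).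
Qed.

End Mu.

Section Collapse.
Variables (V : finType) (K : {set {set V}}) (succ : rel {set V}) (r : nat).
Hypotheses (complexK : simplicial_complex K) (herK : hereditary K succ).
Hypothesis r_gt0 : 0 < r.
Hypothesis unionK : forall s t : {set V}, s \in K -> t \in K ->
  #|s| = #|t| -> r < #|s| -> mu succ s = mu succ t -> s :|: t \in K.
Let ordK : strict_total_order_on K succ := herK.1.
Implicit Types (s t u v w y : {set V}) (L : {set {set V}}).

Definition mu_saturated L :=
  forall w, w \in K -> w != set0 -> mu succ w \in L ->
  exists y, [/\ y \in L, y != set0 & mu succ y = mu succ w].

Lemma mu_saturated_collapse L s : simplicial_complex L -> mu_saturated L ->
  s \in L -> L \subset K -> 1 < #|s| -> mu_saturated (L :\ s :\ mu succ s).
Proof.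
move=> complexL satL sL LK s_gt1 w wK wn.
rewrite !inE => /and3P[wt ws wL].
have [y [yL yn muy]] := satL w wK wn wL.
case: (eqVneq y s) => [ysE|ys]; first by move: wt; rewrite -muy ysE eqxx.
case: (eqVneq y (mu succ s)) => [yE|yt]; last by exists y; rewrite !inE yt ys.
have sK := subsetP LK s sL.
have sn : s != set0 by rewrite -card_gt0 ltnW.
have sc := facet_card (mu_facet complexK herK sK sn).
have [y' [y's y't y'c muy']] := mu_mu_sibling complexK herK sK s_gt1.
exists y'; split; last by rewrite muy' -yE.
- rewrite !inE y't (complexL.2 _ _ sL y's) andbT.
  by apply/eqP => e; move/eqP: y'c; rewrite e sc eq_sym ltn_eqF.
- by rewrite -card_gt0 y'c -ltnS -sc.
Qed.

Section TopSimplex.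
Variables (L : {set {set V}}) (s : {set V}).
Hypotheses (LK : L \subset K) (complexL : simplicial_complex L).
Hypotheses (satL : mu_saturated L) (sL : s \in L) (r_lt_s : r < #|s|).
Hypothesis s_max : forall u, u \in L -> r < #|u| -> u != s -> succ s u.
Let sK : s \in K := subsetP LK s sL.
Let sn : s != set0.
Proof. by rewrite -card_gt0 (ltn_trans r_gt0 r_lt_s). Qed.

Lemma top_card_max u : u \in L -> #|u| <= #|s|.
Proof.
move=> uL; rewrite leqNgt; apply/negP => su.
have uK := subsetP LK u uL.
have us : u != s by apply: contraTneq su => ->; rewrite ltnn.
exact: (succ_asym ordK sK uK (s_max uL (ltn_trans r_lt_s su) us) (herK.2.1 _ _ uK sK su)).
Qed.

Lemma top_coface u : u \in L -> mu succ s \proper u -> u = s.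
Proof.
move=> uL tu; have uK := subsetP LK u uL.
have fs := mu_facet complexK herK sK sn.
have uc : #|u| = #|s|.
  by apply/eqP; rewrite eqn_leq top_card_max // (facet_card fs); apply: proper_card.
have ftu : facet (mu succ s) u by rewrite /facet (proper_sub tu) uc (facet_card fs) /=.
have un : u != set0 by rewrite -card_gt0 uc card_gt0.
apply/eqP; apply: contraT => us; exfalso.
have su : succ s u by apply: s_max; rewrite ?uc.
have muu : mu succ u = mu succ s.
  apply/eqP; apply: contraT => ne; exfalso.
  have ut : succ (mu succ u) (mu succ s).
    by apply: (mu_max complexK herK uK un ftu); rewrite eq_sym.
  exact: (succ_asym ordK sK uK su (herK.2.2 _ _ uK sK un sn ut)).
have [c cs tE] := facetP fs.
have cu : c \notin u.
  apply: contra us => cu; rewrite eq_sym eqEcard uc leqnn andbT.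
  by rewrite -(setD1K cs) -tE subUset sub1set cu (proper_sub tu).
have wE : s :|: u = c |: u.
  by rewrite -{1}(setD1K cs) -tE -setUA (setUidPr (proper_sub tu)).
have wK := unionK sK uK (esym uc) r_lt_s (esym muu).
have fsw : facet s (s :|: u) by rewrite /facet subsetUl wE cardsU1 cu uc /= add1n.
have fuw : facet u (s :|: u) by rewrite /facet subsetUr wE cardsU1 cu /= add1n.
have wn : s :|: u != set0 by apply/set0Pn; exists c; rewrite wE setU11.
have muwL : mu succ (s :|: u) \in L.
  have su' : s != u by rewrite eq_sym.
  by case: (mu_two_facets complexK herK wK fsw fuw su' (esym muu)) => ->.
have [y [yL yn muy]] := satL wK wn muwL.
have := top_card_max yL.
rewrite (facet_card (mu_facet complexK herK (subsetP LK y yL) yn)) muy.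
by rewrite -(facet_card (mu_facet complexK herK wK wn)) wE cardsU1 cu uc ltnn.
Qed.

Lemma top_free_pair : free_pair L s (mu succ s).
Proof.
have fs := mu_facet complexK herK sK sn.
have tn : mu succ s != set0.
  by rewrite -card_gt0 -ltnS -(facet_card fs); apply: leq_ltn_trans r_lt_s.
split=> //; split; first exact: complexL.2 _ _ sL (facet_sub fs).
do 3 split=> //; split; first by rewrite !inE complexL.1 ![set0 == _]eq_sym tn sn.
move=> u v; rewrite !inE => /and3P[ut us uL] vu.
rewrite (complexL.2 _ _ uL vu) andbT; apply/andP; split; apply/eqP => vE.
  by move: us; rewrite (top_coface uL) ?eqxx // properEneq eq_sym ut -vE vu.
have su : s \subset u by rewrite -vE.
by move: us; rewrite eq_sym eqEcard su top_card_max.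
Qed.

End TopSimplex.

Lemma collapses_small L : L \subset K -> simplicial_complex L -> mu_saturated L ->
  exists L', collapses L L' /\ forall s, s \in L' -> #|s| <= r.
Proof.
have [n] := ubnP #|L|; elim: n L => // n IH L /ltnSE Ln LK complexL satL.
set B := [set s in L | r < #|s|].
have [B0|Bn] := eqVneq B set0.
  exists L; split=> [|s sL]; first exact: rt_refl.
  by rewrite leqNgt; apply/negP => rs; move: (in_set0 s); rewrite -B0 inE sL rs.
have BK : B \subset K by apply: subset_trans LK; apply/subsetP => s /setIdP[].
have [s /setIdP[sL rs] s_max] := succ_max_exists ordK BK Bn.
have s_max' u : u \in L -> r < #|u| -> u != s -> succ s u.
  by move=> uL ru; apply: s_max; rewrite inE uL ru.
have fp := top_free_pair LK complexL satL sL rs s_max'.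
have [_ [_ [_ [_ [_ complexL']]]]] := fp.
have s_gt1 : 1 < #|s| by apply: leq_ltn_trans rs.
have L'n : #|L :\ s :\ mu succ s| < n.
  apply: leq_trans Ln; apply: leq_ltn_trans (subset_leq_card (subD1set _ _)) _.
  by rewrite (cardsD1 s L) sL.
have L'K : L :\ s :\ mu succ s \subset K.
  by apply: subset_trans LK; apply/subsetP => w /setD1P[_ /setD1P[]].
have satL' := mu_saturated_collapse complexL satL sL LK s_gt1.
have [L2 [collL2 smallL2]] := IH _ L'n L'K complexL' satL'.
exists L2; split=> //.
by apply: rt_trans collL2; apply: rt_step; exists s, (mu succ s).
Qed.

End Collapse.

Theorem lemma7 (V : finType) (K : {set {set V}}) (succ : rel {set V}) (r : nat) :
  simplicial_complex K ->
  hereditary K succ ->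
  0 < r ->
  (forall s t : {set V}, s \in K -> t \in K ->
     #|s| = #|t| -> r < #|s| -> mu succ s = mu succ t -> s :|: t \in K) ->
  exists L : {set {set V}}, collapses K L /\ (forall s, s \in L -> #|s| <= r).
Proof.
move=> complexK herK r_gt0 unionK.
apply: (collapses_small complexK herK r_gt0 unionK (subxx K) complexK).
by move=> w wK wn _; exists w.
Qed.
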